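(* Let $(\mathcal{X},\|\cdot\|)$ be a real Banach space, $P$ a probability distribution on a measurable space $\mathcal{E}$, and $Q,P_e:\mathcal{X}\to\mathcal{X}$ with $\|Q(\theta_1)-Q(\theta_2)\|\le\rho\|\theta_1-\theta_2\|$ ($\rho\in[0,1)$, $\theta^\star$ the unique fixed point of $Q$) and $\|P_e(\theta_1)-P_e(\theta_2)\|\le L\|\theta_1-\theta_2\|$ for all $e$ ($L\ge0$). Let $W_e:=\|P_e(\theta^\star)-\theta^\star\|$ and assume $\mathbb{E}[W_e]\le\sigma$ and $W_e\le M$ almost surely, where $0\le\sigma\le M$, and that $\gamma:=\rho L<1$. Let $\theta_0\in\mathcal{X}$, $e_0,e_1,\dots$ i.i.d. $\sim P$, $\theta_{t+1}=Q(P_{e_t}(\theta_t))$, and $R_0:=\|\theta_0-\theta^\star\|$. For every $r>\rho M/(1-\gamma)$ define $T_0(r):=0$ if $R_0\le r-\rho M/(1-\gamma)$, and otherwise \[T_0(r):=\left\lceil\frac{\log\big(R_0/(r-\rho M/(1-\gamma))\big)}{\log(1/\gamma)}\right\rceil.\] Then $\|\theta_t-\theta^\star\|\le r$ almost surely for all $t\ge T_0(r)$. *)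

From HB Require Import structures.
From mathcomp Require Import all_boot all_order all_algebra.
From mathcomp Require Import all_classical all_reals all_analysis.
Set Implicit Arguments. Unset Strict Implicit. Unset Printing Implicit Defensive.
Import Order.TTheory GRing.Theory Num.Theory.
Import numFieldNormedType.Exports.
Local Open Scope classical_set_scope.
Local Open Scope ring_scope.

Definition mutually_independent {R : realType} {dO dE : measure_display}
  {Omega : measurableType dO} {E : measurableType dE}
  (Pr : probability Omega R) (e : nat -> Omega -> E) : Prop :=
  forall (s : seq nat) (A : nat -> set E),
    uniq s -> (forall i, i \in s -> measurable (A i)) ->
    Pr (\big[setI/setT]_(i <- s) (e i @^-1` A i)) =
    (\prod_(i <- s) Pr (e i @^-1` A i))%E.

Definition identically_distributed_as {R : realType} {dO dE : measure_display}
  {Omega : measurableType dO} {E : measurableType dE}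
  (Pr : probability Omega R) (e : nat -> Omega -> E) (P : probability E R) : Prop :=
  forall t (A : set E), measurable A -> Pr (e t @^-1` A) = P A.

Fixpoint iterates {X Omega E : Type} (Q : X -> X) (Pe : E -> X -> X)
  (e : nat -> Omega -> E) (theta0 : X) (t : nat) (w : Omega) : X :=
  match t with
  | 0 => theta0
  | t'.+1 => Q (Pe (e t' w) (iterates Q Pe e theta0 t' w))
  end.

Definition T0 {R : realType} (R0 rho M gamma r : R) : int :=
  let c := rho * M / (1 - gamma) in
  if R0 <= r - c then 0%Z
  else Num.ceil (ln (R0 / (r - c)) / ln (gamma^-1)).

From HB Require Import structures.
From mathcomp Require Import all_boot all_order all_algebra.
From mathcomp Require Import all_classical all_reals all_analysis.
From mathcomp Require Import ring lra.
Set Implicit Arguments. Unset Strict Implicit. Unset Printing Implicit Defensive.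
Import Order.TTheory GRing.Theory Num.Theory.
Import numFieldNormedType.Exports.
Local Open Scope classical_set_scope.
Local Open Scope ring_scope.

(* The only probabilistic input is that almost surely every sampled [e_t]
   satisfies [W_{e_t} <= M]: each [e_t] has law [P], and a countable union of
   null events is null.  On that event the error [d_t] of the iteration obeys
   [d_{t+1} <= rho (L d_t + M) = gamma d_t + rho M], hence
   [d_t <= gamma^t R_0 + rho M / (1 - gamma)], and [T_0(r)] is precisely a time
   from which [gamma^t R_0 <= r - rho M / (1 - gamma)]. *)

Lemma le_affine_recursion (R : realFieldType) (u : nat -> R) (g b : R) :
  0 <= g -> g < 1 -> 0 <= b -> (forall k, u k.+1 <= g * u k + b) ->
  forall k, u k <= g ^+ k * u 0 + b / (1 - g).
Proof.
move=> g0 g1 b0 step; have fixb : g * (b / (1 - g)) + b = b / (1 - g).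
  by field; rewrite subr_eq0 gt_eqF.
elim=> [|k IHk].
  by rewrite expr0 mul1r lerDl divr_ge0 // subr_ge0 ltW.
apply: le_trans (step k) _.
by rewrite -fixb exprS -mulrA addrA -mulrDr lerD2r ler_wpM2l.
Qed.

Lemma expr_mulr_le_of_ceil_log (R : realType) (g x a : R) (t : nat) :
  0 < g -> g < 1 -> 0 < x -> 0 < a ->
  (Num.ceil (ln (x / a) / ln g^-1) <= t%:Z)%R -> g ^+ t * x <= a.
Proof.
move=> g0 g1 x0 a0 ht.
have lng0 : 0 < ln g^-1 by rewrite ln_gt0 // invf_gt1.
have : ln (x / a) <= ln (g^-1 ^+ t).
  rewrite lnXn ?invr_gt0 // -mulr_natl -ler_pdivrMr //.
  apply: le_trans (ceil_ge _) _.
  by rewrite -(ler_int R) in ht.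
rewrite ler_ln ?posrE ?divr_gt0 ?exprn_gt0 ?invr_gt0 //.
by rewrite ler_pdivrMr // exprVn mulrC ler_pdivlMr ?exprn_gt0 // mulrC.
Qed.

Lemma expr_mulr_le_of_T0_le (R : realType) (R0 rho M g r : R) (t : nat) :
  0 < g -> g < 1 -> 0 <= R0 -> rho * M / (1 - g) < r ->
  (T0 R0 rho M g r <= t%:Z)%R -> g ^+ t * R0 <= r - rho * M / (1 - g).
Proof.
rewrite /T0 => g0 g1 R00 hr; case: ifPn => [R0_le _ | /negbTE R0_gt ht].
  by apply: le_trans R0_le; rewrite ler_piMl // exprn_ile1 // ltW.
apply: expr_mulr_le_of_ceil_log => //; last by rewrite subr_gt0.
by rewrite lt_neqAle R00 andbT; apply: contraFN R0_gt => /eqP <-;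
  rewrite subr_ge0 ltW.
Qed.

Lemma norm_comp_Lipschitz_sub_fixpoint (R : numDomainType) (V : normedModType R)
    (Q F : V -> V) (rho L : R) (x y : V) :
  0 <= rho -> Q x = x ->
  (forall a b, `|Q a - Q b| <= rho * `|a - b|) ->
  (forall a b, `|F a - F b| <= L * `|a - b|) ->
  `|Q (F y) - x| <= rho * L * `|y - x| + rho * `|F x - x|.
Proof.
move=> rho0 Qx hQ hF; rewrite -{1}Qx; apply: le_trans (hQ _ _) _.
have -> : F y - x = (F y - F x) + (F x - x) by rewrite addrA subrK.
rewrite -mulrA -mulrDr ler_wpM2l //.
by apply: le_trans (ler_normD _ _) _; rewrite lerD ?hF.
Qed.

Section iterates_bound.
Variables (R : realType) (X : normedModType R) (E Omega : Type).
Variables (Q : X -> X) (Pe : E -> X -> X) (rho L M : R) (thetas : X).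
Hypotheses (rho0 : 0 <= rho) (gamma0 : 0 <= rho * L) (gamma1 : rho * L < 1).
Hypotheses (M0 : 0 <= M) (Qfix : Q thetas = thetas).
Hypothesis hQ : forall a b, `|Q a - Q b| <= rho * `|a - b|.
Hypothesis hPe : forall e a b, `|Pe e a - Pe e b| <= L * `|a - b|.

Lemma iterates_dist_le (e : nat -> Omega -> E) (theta0 : X) (w : Omega) :
  (forall k, `|Pe (e k w) thetas - thetas| <= M) ->
  forall t, `|iterates Q Pe e theta0 t w - thetas| <=
    (rho * L) ^+ t * `|theta0 - thetas| + rho * M / (1 - rho * L).
Proof.
move=> noiseM t.
pose d k := `|iterates Q Pe e theta0 k w - thetas|.
apply: (le_affine_recursion (u := d) gamma0 gamma1 (mulr_ge0 rho0 M0)) => k.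
apply: le_trans (norm_comp_Lipschitz_sub_fixpoint _ rho0 Qfix hQ (hPe _)) _.
by rewrite lerD2l ler_wpM2l.
Qed.

End iterates_bound.

Lemma ae_comp_of_law (R : realType) (dO dE : measure_display)
    (Omega : measurableType dO) (E : measurableType dE)
    (mu : {measure set Omega -> \bar R}) (nu : {measure set E -> \bar R})
    (f : Omega -> E) (p : E -> Prop) :
  measurable_fun setT f -> (forall A, measurable A -> mu (f @^-1` A) = nu A) ->
  {ae nu, forall x, p x} -> {ae mu, forall w, p (f w)}.
Proof.
move=> mf law [A [mA nuA0 notpA]]; exists (f @^-1` A); split.
- by rewrite -[f @^-1` A]setTI; apply: mf.
- by rewrite law.
- by move=> w /= npw; apply: notpA.
Qed.

Theorem lemma4p13 (R : realType) (X : completeNormedModType R)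
  (dE : measure_display) (E : measurableType dE) (P : probability E R)
  (Q : X -> X) (Pe : E -> X -> X) (rho L sigma M : R) (thetas : X)
  (hrho0 : 0 <= rho) (hrho1 : rho < 1)
  (hQ : forall th1 th2, `|Q th1 - Q th2| <= rho * `|th1 - th2|)
  (hfix : Q thetas = thetas)
  (hL0 : 0 <= L)
  (hPe : forall e th1 th2, `|Pe e th1 - Pe e th2| <= L * `|th1 - th2|)
  (hsigma0 : 0 <= sigma) (hsigmaM : sigma <= M)
  (hmean : (\int[P]_(e in setT) (`|Pe e thetas - thetas|)%:E <= sigma%:E)%E)
  (hbound : {ae P, forall e, `|Pe e thetas - thetas| <= M})
  (hgamma0 : 0 < rho * L) (hgamma1 : rho * L < 1)
  (dO : measure_display) (Omega : measurableType dO) (Pr : probability Omega R)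
  (e : nat -> Omega -> E)
  (he_meas : forall t, measurable_fun setT (e t))
  (he_ind : mutually_independent Pr e)
  (he_dist : identically_distributed_as Pr e P)
  (theta0 : X) (r : R)
  (hr : rho * M / (1 - rho * L) < r) :
  {ae Pr, forall w, forall t : nat,
     (T0 `|theta0 - thetas| rho M (rho * L) r <= t%:Z)%R ->
     `|iterates Q Pe e theta0 t w - thetas| <= r}.
Proof.
have M0 : 0 <= M by apply: le_trans hsigmaM.
have noiseM : {ae Pr, forall w k, `|Pe (e k w) thetas - thetas| <= M}.
  apply: ae_foralln => k.
  exact: (ae_comp_of_law (he_meas k) (he_dist k) hbound).
apply: filterS noiseM => w noiseM t hT.
apply: le_trans (iterates_dist_le hrho0 (ltW hgamma0) hgamma1 M0 hfix hQ hPe theta0 noiseM t) _.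
by rewrite -lerBrDr expr_mulr_le_of_T0_le.
Qed.
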